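(* Let $f_r(w,u)(x)=\sum_{l=1}^{n_1}w_{r,l}\big(\sum_{m=1}^d u_{lm}x_m\big)^{\alpha_l}$ with $\alpha\in\mathbb{R}^{n_1}$, $\alpha_l\ge1$, and let $\rho_x=\max_{i\in[n]}\|x^i\|_{p_u'}$. Then for every $x\in\{x^1,\dots,x^n\}$, every $(w,u)\in B_{++}$, all $r,s,q\in[K]$, $t,b'\in[n_1]$, $a'\in[n_1]$, $b''\in[d]$: $$\sum_{t}w_{s,t}\frac{\partial f_r(x)}{\partial w_{s,t}}\le C_w:=\rho_w\Psi^\alpha_{p_w',p_u}(\mathbf{1},\rho_u\rho_x),\qquad \sum_{a,b}u_{ab}\frac{\partial f_r(x)}{\partial u_{ab}}\le C_u:=\rho_w\Psi^\alpha_{p_w',p_u}(\alpha,\rho_u\rho_x),$$ $$\sum_t w_{s,t}\frac{\partial^2 f_r(x)}{\partial w_{s,t}\partial w_{q,b'}}=0,\qquad \sum_{a,b}u_{ab}\frac{\partial^2 f_r(x)}{\partial u_{ab}\partial w_{q,b'}}\le\|\alpha\|_\infty\frac{\partial f_r(x)}{\partial w_{q,b'}},$$ $$\sum_t w_{s,t}\frac{\partial^2 f_r(x)}{\partial w_{s,t}\partial u_{a'b''}}\le\frac{\partial f_r(x)}{\partial u_{a'b''}},\qquad \sum_{a,b}u_{ab}\frac{\partial^2 f_r(x)}{\partial u_{ab}\partial u_{a'b''}}\le(\|\alpha\|_\infty-1)\frac{\partial f_r(x)}{\partial u_{a'b''}}.$$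
   Context: Data $x^i\in\mathbb{R}^d_+$, $i\in[n]$. $w\in\mathbb{R}^{K\times n_1}$ with rows $w_1,\dots,w_K$, $u\in\mathbb{R}^{n_1\times d}$. Given $p_w,p_u\in(1,\infty)$, $\rho_w,\rho_u>0$, $B_{++}=\{(w,u)\in\mathbb{R}^{K\times n_1}_{++}\times\mathbb{R}^{n_1\times d}_{++}:\|u\|_{p_u}\le\rho_u,\ \|w_i\|_{p_w}\le\rho_w\ \forall i\}$ (entrywise norms); $p'=p/(p-1)$. $\mathbf{1}$ is the all-ones vector in $\mathbb{R}^{n_1}$. For $p,q\ge1$ and $\alpha\in\mathbb{R}^{n_1}_{++}$, $$\Psi^{\alpha}_{p,q}(\delta,t)=\Big(\Big[\sum_{l\in J}(\delta_l t^{\alpha_l})^{\frac{pq}{q-\bar\alpha p}}\Big]^{1-\frac{\bar\alpha p}{q}}+\max_{j\in J^c}(\delta_j t^{\alpha_j})^p\Big)^{1/p},\quad \delta\in\mathbb{R}^{n_1}_{++},\ t>0,$$ with $J=\{l:\alpha_lp<q\}$, $J^c=\{l:\alpha_lp\ge q\}$, $\bar\alpha=\min_{l\in J}\alpha_l$, empty sums/maxima equal to $0$. *)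

From Stdlib Require Import Reals Lra Lia Classical ClassicalEpsilon.
Open Scope R_scope.

(* Matrices are functions nat -> nat -> R; only indices in range matter. *)
Definition mat := nat -> nat -> R.

Fixpoint sumR (n : nat) (f : nat -> R) : R :=
  match n with O => 0 | S k => sumR k f + f k end.

(* maxR n f = max(0, f 0, ..., f (n-1)); used only for nonnegative families,
   so it is the maximum, with empty max = 0. *)
Fixpoint maxR (n : nat) (f : nat -> R) : R :=
  match n with O => 0 | S k => Rmax (maxR k f) (f k) end.

(* real power x^a for x >= 0 and a > 0 (0^a = 0) *)
Definition rpow (x a : R) : R := if Rlt_dec 0 x then Rpower x a else 0.

Definition conj (p : R) : R := p / (p - 1).

Definition lpnorm_mat (p : R) (m k : nat) (A : mat) : R :=
  rpow (sumR m (fun a => sumR k (fun b => rpow (Rabs (A a b)) p))) (1 / p).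

Definition lpnorm_vec (p : R) (k : nat) (v : nat -> R) : R :=
  rpow (sumR k (fun b => rpow (Rabs (v b)) p)) (1 / p).

Definition linf (k : nat) (v : nat -> R) : R := maxR k (fun l => Rabs (v l)).

Fixpoint minJ (alpha : nat -> R) (p q : R) (n : nat) : option R :=
  match n with
  | O => None
  | S k =>
    let rest := minJ alpha p q k in
    if Rlt_dec (alpha k * p) q then
      match rest with None => Some (alpha k) | Some a => Some (Rmin a (alpha k)) end
    else rest
  end.

Definition alphabar (alpha : nat -> R) (p q : R) (n : nat) : R :=
  match minJ alpha p q n with Some a => a | None => 0 end.

Definition Psi (n1 : nat) (alpha delta : nat -> R) (p q t : R) : R :=
  let ab := alphabar alpha p q n1 in
  let term1 :=
    rpow (sumR n1 (fun l => if Rlt_dec (alpha l * p) q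
                            then rpow (delta l * rpow t (alpha l)) (p * q / (q - ab * p))
                            else 0))
         (1 - ab * p / q) in
  let term2 :=
    maxR n1 (fun l => if Rlt_dec (alpha l * p) q then 0
                      else rpow (delta l * rpow t (alpha l)) p) in
  rpow (term1 + term2) (1 / p).

Definition fnet (n1 d : nat) (alpha : nat -> R) (x : nat -> R) (r : nat)
  (w u : mat) : R :=
  sumR n1 (fun l => w r l * rpow (sumR d (fun m => u l m * x m)) (alpha l)).

Definition upd (M : mat) (i j : nat) (h : R) : mat :=
  fun a b => if andb (Nat.eqb a i) (Nat.eqb b j) then h else M a b.

Definition pdw (s t : nat) (g : mat -> mat -> R) : mat -> mat -> R :=
  fun w u => epsilon (inhabits 0)
    (fun D => derivable_pt_lim (fun h => g (upd w s t h) u) (w s t) D).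

Definition pdu (a b : nat) (g : mat -> mat -> R) : mat -> mat -> R :=
  fun w u => epsilon (inhabits 0)
    (fun D => derivable_pt_lim (fun h => g w (upd u a b h)) (u a b) D).

Definition Bpp (K n1 d : nat) (pw pu rhow rhou : R) (w u : mat) : Prop :=
  (forall r l, (r < K)%nat -> (l < n1)%nat -> 0 < w r l) /\
  (forall l m, (l < n1)%nat -> (m < d)%nat -> 0 < u l m) /\
  lpnorm_mat pu n1 d u <= rhou /\
  (forall i, (i < K)%nat -> lpnorm_vec pw n1 (w i) <= rhow).

From Stdlib Require Import Reals Lra Lia Bool ClassicalEpsilon.
Open Scope R_scope.
Open Scope bool_scope.

(* With S_l = sum_m u_lm x_m >= 0 the network is f_r = sum_l w_rl S_l^alpha_l, so
   df/dw_st = [s = r] S_t^alpha_t and df/du_ab = w_ra alpha_a S_a^(alpha_a - 1) x_b.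
   Contracting with w or u (Euler's identity for homogeneous functions) turns the six
   quantities either into sums sum_l w_rl delta_l S_l^alpha_l, with delta = 1 or alpha,
   or into a first derivative times 0, 1, alpha_l or alpha_l - 1.  For the sums, Hölder in
   w gives the factor rho_w, and Hölder in each row of u gives S_l <= rho_u rho_x y_l^(1/p_u)
   where y_l = ||u_l||^p_u / rho_u^p_u lies in the simplex.  The remaining sum
   sum_l (delta_l t^alpha_l)^p y_l^(alpha_l p / p_u) is bounded by a last Hölder inequality
   with exponent 1 / (1 - alphabar p / p_u) over J, and by the maximum over J^c, where the
   exponents of y_l are at least 1. *)


(** * Real powers *)

Lemma exp_le_compat a b : a <= b -> exp a <= exp b.
Proof. intros [H | <-]; [left; apply exp_increasing, H | right; reflexivity]. Qed.

Lemma rpow_Rpower x a : 0 < x -> rpow x a = Rpower x a.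
Proof. intros Hx; unfold rpow; destruct (Rlt_dec 0 x); [reflexivity | lra]. Qed.

Lemma rpow_0_l a : rpow 0 a = 0.
Proof. unfold rpow; destruct (Rlt_dec 0 0); [lra | reflexivity]. Qed.

Lemma rpow_ge0 x a : 0 <= rpow x a.
Proof.
unfold rpow; destruct (Rlt_dec 0 x); [left; apply exp_pos | lra].
Qed.

Lemma rpow_gt0 x a : 0 < x -> 0 < rpow x a.
Proof. intros Hx; rewrite rpow_Rpower by exact Hx; apply exp_pos. Qed.

Lemma rpow_mult_distr x y a : 0 <= x -> 0 <= y -> rpow (x * y) a = rpow x a * rpow y a.
Proof.
intros [Hx | <-] [Hy | <-];
  try (rewrite ?Rmult_0_l, ?Rmult_0_r, !rpow_0_l; ring).
rewrite !rpow_Rpower by (try apply Rmult_lt_0_compat; assumption).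
symmetry; apply Rpower_mult_distr; assumption.
Qed.

Lemma rpow_rpow x a b : 0 <= x -> rpow (rpow x a) b = rpow x (a * b).
Proof.
intros [Hx | <-]; [| rewrite !rpow_0_l; reflexivity].
rewrite (rpow_Rpower x a), rpow_Rpower, rpow_Rpower by (try apply exp_pos; assumption).
apply Rpower_mult.
Qed.

Lemma rpow_plus x a b : 0 <= x -> rpow x (a + b) = rpow x a * rpow x b.
Proof.
intros [Hx | <-]; [| rewrite !rpow_0_l; ring].
rewrite !rpow_Rpower by exact Hx; apply Rpower_plus.
Qed.

Lemma rpow_1_r x : 0 <= x -> rpow x 1 = x.
Proof.
intros [Hx | <-]; [| apply rpow_0_l].
rewrite rpow_Rpower by exact Hx; apply Rpower_1, Hx.
Qed.

Lemma rpow_1_l a : rpow 1 a = 1.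
Proof. rewrite rpow_Rpower by lra; unfold Rpower; rewrite ln_1, Rmult_0_r; apply exp_0. Qed.

Lemma rpow_Rinv y a : 0 < y -> rpow (/ y) a = / rpow y a.
Proof.
intros Hy; rewrite !rpow_Rpower by (try apply Rinv_0_lt_compat; exact Hy).
unfold Rpower; rewrite ln_Rinv, <- exp_Ropp by exact Hy; f_equal; ring.
Qed.

Lemma rpow_div x y a : 0 <= x -> 0 < y -> rpow (x / y) a = rpow x a / rpow y a.
Proof.
intros Hx Hy; unfold Rdiv.
rewrite rpow_mult_distr, rpow_Rinv; [reflexivity | exact Hy | exact Hx |].
left; apply Rinv_0_lt_compat, Hy.
Qed.

Lemma rpow_le_compat x y a : 0 <= x <= y -> 0 < a -> rpow x a <= rpow y a.
Proof.
intros [[Hx | <-] Hxy] Ha; [| rewrite rpow_0_l; apply rpow_ge0].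
rewrite !rpow_Rpower by lra; apply Rle_Rpower_l; lra.
Qed.

Lemma rpow_le_exp_le1 y a b : 0 <= y <= 1 -> a <= b -> rpow y b <= rpow y a.
Proof.
intros [[Hy | <-] Hy1] Hab; [| rewrite !rpow_0_l; lra].
rewrite !rpow_Rpower by exact Hy; unfold Rpower; apply exp_le_compat.
assert (ln y <= 0).
{ rewrite <- ln_1; destruct Hy1 as [Hy1 | ->]; [left; apply ln_increasing |]; lra. }
nra.
Qed.

Lemma rpow_rpow_inv x a : 0 <= x -> a <> 0 -> rpow (rpow x a) (1 / a) = x.
Proof.
intros Hx Ha; rewrite rpow_rpow by exact Hx.
replace (a * (1 / a)) with 1 by (field; exact Ha); apply rpow_1_r, Hx.
Qed.

Lemma rpow_inv_rpow x a : 0 <= x -> a <> 0 -> rpow (rpow x (1 / a)) a = x.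
Proof.
intros Hx Ha; rewrite rpow_rpow by exact Hx.
replace (1 / a * a) with 1 by (field; exact Ha); apply rpow_1_r, Hx.
Qed.

Lemma rpow_minus1_mult y b : 0 <= y -> rpow y (b - 1) * y = rpow y b.
Proof.
intros Hy; rewrite <- (rpow_1_r y) at 2 by exact Hy.
rewrite <- rpow_plus by exact Hy; f_equal; ring.
Qed.

(** * Finite sums *)

Lemma sumR_ext n F G : (forall l, (l < n)%nat -> F l = G l) -> sumR n F = sumR n G.
Proof.
induction n as [| n IH]; intros H; simpl; [reflexivity |].
rewrite IH, H; [reflexivity | lia | intros; apply H; lia].
Qed.

Lemma sumR_le n F G : (forall l, (l < n)%nat -> F l <= G l) -> sumR n F <= sumR n G.
Proof.
induction n as [| n IH]; intros H; simpl; [lra |].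
apply Rplus_le_compat; [apply IH; intros; apply H |apply H]; lia.
Qed.

Lemma sumR_plus n F G : sumR n (fun l => F l + G l) = sumR n F + sumR n G.
Proof. induction n as [| n IH]; simpl; [| rewrite IH]; ring. Qed.

Lemma sumR_scal n c F : sumR n (fun l => c * F l) = c * sumR n F.
Proof. induction n as [| n IH]; simpl; [| rewrite IH]; ring. Qed.

Lemma sumR_0 n : sumR n (fun _ => 0) = 0.
Proof. induction n as [| n IH]; simpl; [| rewrite IH]; ring. Qed.

Lemma sumR_ge0 n F : (forall l, (l < n)%nat -> 0 <= F l) -> 0 <= sumR n F.
Proof. intros H; rewrite <- (sumR_0 n); apply sumR_le, H. Qed.

Lemma sumR_delta n t g :
  sumR n (fun l => if Nat.eqb l t then g l else 0) = if Nat.ltb t n then g t else 0.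
Proof.
induction n as [| n IH]; simpl; [reflexivity |]; rewrite IH.
destruct (Nat.eqb_spec n t), (Nat.ltb_spec t n), (Nat.ltb_spec t (S n));
  subst; try lia; ring.
Qed.

Lemma sumR_ge_term n F l :
  (forall k, (k < n)%nat -> 0 <= F k) -> (l < n)%nat -> F l <= sumR n F.
Proof.
induction n as [| n IH]; simpl; intros H Hl; [lia |].
destruct (Nat.eq_dec l n) as [-> | Hne].
- assert (0 <= sumR n F) by (apply sumR_ge0; intros; apply H; lia); lra.
- assert (F l <= sumR n F) by (apply IH; [intros; apply H |]; lia).
  assert (0 <= F n) by (apply H; lia); lra.
Qed.

Lemma maxR_ge0 n f : 0 <= maxR n f.
Proof.
induction n as [| n IH]; simpl; [lra |]; eapply Rle_trans; [exact IH | apply Rmax_l].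
Qed.

Lemma maxR_ge n f l : (l < n)%nat -> f l <= maxR n f.
Proof.
induction n as [| n IH]; simpl; intros Hl; [lia |].
destruct (Nat.eq_dec l n) as [-> | Hne]; [apply Rmax_r |].
eapply Rle_trans; [apply IH; lia | apply Rmax_l].
Qed.

Lemma le_linf n v l : (l < n)%nat -> 0 <= v l -> v l <= linf n v.
Proof.
intros Hl Hv; unfold linf; rewrite <- (Rabs_pos_eq (v l)) by exact Hv.
exact (maxR_ge n (fun k => Rabs (v k)) l Hl).
Qed.

(** * Hölder's inequality *)

Lemma weighted_am_gm X Y t : 0 <= X -> 0 <= Y -> 0 < t < 1 ->
  rpow X t * rpow Y (1 - t) <= t * X + (1 - t) * Y.
Proof.
intros [HX | <-] [HY | <-] Ht; try (rewrite ?rpow_0_l; nra).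
set (M := t * X + (1 - t) * Y); assert (HM : 0 < M) by (unfold M; nra).
rewrite !rpow_Rpower by assumption; unfold Rpower; rewrite <- exp_plus.
rewrite <- (exp_ln M) by exact HM; apply exp_le_compat.
(* concavity of ln through ln z <= z - 1 at z = X/M and z = Y/M *)
assert (HXM := exp_ineq1_le (ln (X / M))); assert (HYM := exp_ineq1_le (ln (Y / M))).
rewrite exp_ln in HXM, HYM by (apply Rdiv_lt_0_compat; assumption).
unfold Rdiv in HXM, HYM.
rewrite ln_mult, ln_Rinv in HXM, HYM by (try apply Rinv_0_lt_compat; assumption).
assert (t * (X * / M) + (1 - t) * (Y * / M) = 1) by (unfold M; field; fold M; lra).
apply Rmult_le_compat_l with (r := t) in HXM; [| lra].
apply Rmult_le_compat_l with (r := 1 - t) in HYM; [| lra].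
lra.
Qed.

Lemma conj_gt1 p : 1 < p -> 1 < conj p.
Proof.
intros Hp; unfold conj; apply (Rmult_lt_reg_r (p - 1)); [lra |].
unfold Rdiv; rewrite Rmult_assoc, Rinv_l; lra.
Qed.

Lemma conj_inv_sum p : 1 < p -> 1 / p + 1 / conj p = 1.
Proof. intros Hp; unfold conj; field; lra. Qed.

Lemma young a b p : 0 <= a -> 0 <= b -> 1 < p ->
  a * b <= rpow a p / p + rpow b (conj p) / conj p.
Proof.
intros Ha Hb Hp; set (q := conj p).
assert (Hq : 1 < q) by (apply conj_gt1, Hp).
assert (Hpq : 1 / p + 1 / q = 1) by (apply conj_inv_sum, Hp).
assert (Ht : 0 < 1 / p < 1).
{ assert (0 < 1 / q) by (apply Rdiv_lt_0_compat; lra).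
  split; [apply Rdiv_lt_0_compat |]; lra. }
assert (H := weighted_am_gm (rpow a p) (rpow b q) (1 / p) (rpow_ge0 _ _) (rpow_ge0 _ _) Ht).
replace (1 - 1 / p) with (1 / q) in H by lra.
rewrite !rpow_rpow_inv in H by lra.
unfold Rdiv in *; lra.
Qed.

Lemma rpow_sumR_eq0 n a p : (forall l, (l < n)%nat -> 0 <= a l) ->
  sumR n (fun l => rpow (a l) p) = 0 -> forall l, (l < n)%nat -> a l = 0.
Proof.
intros Ha Hsum l Hl.
assert (rpow (a l) p <= 0).
{ rewrite <- Hsum; apply (sumR_ge_term n (fun l => rpow (a l) p)); [intros; apply rpow_ge0 | exact Hl]. }
destruct (Ha l Hl) as [Hpos | Hzero]; [| auto].
assert (0 < rpow (a l) p) by (apply rpow_gt0, Hpos); lra.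
Qed.

Lemma holder n a b p : 1 < p ->
  (forall l, (l < n)%nat -> 0 <= a l) -> (forall l, (l < n)%nat -> 0 <= b l) ->
  sumR n (fun l => a l * b l) <=
  rpow (sumR n (fun l => rpow (a l) p)) (1 / p) *
  rpow (sumR n (fun l => rpow (b l) (conj p))) (1 / conj p).
Proof.
intros Hp Ha Hb; set (q := conj p).
assert (Hq : 1 < q) by (apply conj_gt1, Hp).
set (A := sumR n (fun l => rpow (a l) p)); set (B := sumR n (fun l => rpow (b l) q)).
assert (HA : 0 <= A) by (apply sumR_ge0; intros; apply rpow_ge0).
assert (HB : 0 <= B) by (apply sumR_ge0; intros; apply rpow_ge0).
assert (HAB : 0 <= rpow A (1 / p) * rpow B (1 / q)) by (apply Rmult_le_pos; apply rpow_ge0).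
destruct HA as [HA | HA].
2: { rewrite (sumR_ext n _ (fun _ => 0)), sumR_0; [exact HAB |].
     intros l Hl; rewrite (rpow_sumR_eq0 n a p Ha (eq_sym HA) l Hl); ring. }
destruct HB as [HB | HB].
2: { rewrite (sumR_ext n _ (fun _ => 0)), sumR_0; [exact HAB |].
     intros l Hl; rewrite (rpow_sumR_eq0 n b q Hb (eq_sym HB) l Hl); ring. }
set (A' := rpow A (1 / p)); set (B' := rpow B (1 / q)).
assert (HA' : 0 < A') by (apply rpow_gt0, HA); assert (HB' : 0 < B') by (apply rpow_gt0, HB).
assert (HA'p : rpow A' p = A) by (apply rpow_inv_rpow; lra).
assert (HB'q : rpow B' q = B) by (apply rpow_inv_rpow; lra).
(* Young's inequality for the normalized vectors a / A' and b / B' *)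
apply Rle_trans with
  (sumR n (fun l => A' * B' * (/ p * / A * rpow (a l) p + / q * / B * rpow (b l) q))).
- apply sumR_le; intros l Hl.
  assert (Hy := young (a l / A') (b l / B') p).
  assert (Hal : 0 <= a l / A') by (apply Rmult_le_pos; [apply Ha, Hl | left; apply Rinv_0_lt_compat, HA']).
  assert (Hbl : 0 <= b l / B') by (apply Rmult_le_pos; [apply Hb, Hl | left; apply Rinv_0_lt_compat, HB']).
  specialize (Hy Hal Hbl Hp); fold q in Hy.
  rewrite !rpow_div, HA'p, HB'q in Hy by (try apply Ha; try apply Hb; assumption).
  replace (a l * b l) with (A' * B' * (a l / A' * (b l / B'))) by (field; lra).
  apply Rmult_le_compat_l; [nra |].
  eapply Rle_trans; [exact Hy |].
  unfold Rdiv; lra.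
- rewrite sumR_scal, sumR_plus, !sumR_scal; fold A B.
  assert (Hpq : 1 / p + 1 / q = 1) by (apply conj_inv_sum, Hp).
  replace (/ p * / A * A + / q * / B * B) with (1 / p + 1 / q) by (field; lra).
  rewrite Hpq; lra.
Qed.

(** * The function Psi *)

Lemma minJ_None alpha p q n :
  minJ alpha p q n = None -> forall l, (l < n)%nat -> ~ alpha l * p < q.
Proof.
induction n as [| n IH]; simpl; intros H l Hl; [lia |].
destruct (Rlt_dec (alpha n * p) q); [destruct (minJ alpha p q n); discriminate |].
destruct (Nat.eq_dec l n) as [-> | Hne]; [assumption | apply IH; [assumption | lia]].
Qed.

Lemma minJ_Some alpha p q n m : minJ alpha p q n = Some m ->
  (forall l, (l < n)%nat -> alpha l * p < q -> m <= alpha l) /\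
  exists k, (k < n)%nat /\ alpha k * p < q /\ m = alpha k.
Proof.
revert m; induction n as [| n IH]; simpl; intros m H; [discriminate |].
destruct (Rlt_dec (alpha n * p) q) as [Hn | Hn].
- destruct (minJ alpha p q n) as [m0 |] eqn:E; injection H as <-.
  + destruct (IH m0 eq_refl) as [Hmin [k [Hk [HkJ ->]]]]; split.
    * intros l Hl HlJ; destruct (Nat.eq_dec l n) as [-> | Hne]; [apply Rmin_r |].
      eapply Rle_trans; [apply Rmin_l | apply Hmin; [lia | exact HlJ]].
    * unfold Rmin; destruct (Rle_dec (alpha k) (alpha n)).
      -- exists k; repeat split; [lia | assumption].
      -- exists n; repeat split; [lia | assumption].
  + split; [| exists n; repeat split; [lia | assumption]].
    intros l Hl HlJ; destruct (Nat.eq_dec l n) as [-> | Hne]; [lra |].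
    exfalso; apply (minJ_None _ _ _ _ E l); [lia | exact HlJ].
- destruct (IH m H) as [Hmin [k [Hk [HkJ ->]]]]; split.
  + intros l Hl HlJ; destruct (Nat.eq_dec l n) as [-> | Hne]; [contradiction |].
    apply Hmin; [lia | exact HlJ].
  + exists k; repeat split; [lia | assumption].
Qed.

Lemma sumR_mul_simplex_rpow_le n a y e th : 0 < th < 1 ->
  (forall l, (l < n)%nat -> 0 <= a l) -> (forall l, (l < n)%nat -> 0 <= y l <= 1) ->
  sumR n y <= 1 -> (forall l, (l < n)%nat -> th <= e l) ->
  sumR n (fun l => a l * rpow (y l) (e l)) <=
  rpow (sumR n (fun l => rpow (a l) (1 / (1 - th)))) (1 - th).
Proof.
intros Hth Ha Hy Hsy He; set (p := 1 / (1 - th)).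
assert (Hp : 1 < p).
{ unfold p; apply (Rmult_lt_reg_r (1 - th)); [lra |].
  replace (1 / (1 - th) * (1 - th)) with 1 by (field; lra); lra. }
assert (Hconj : conj p = 1 / th) by (unfold conj, p; field; lra).
apply Rle_trans with (sumR n (fun l => a l * rpow (y l) th)).
{ apply sumR_le; intros l Hl; apply Rmult_le_compat_l; [apply Ha, Hl |].
  apply rpow_le_exp_le1; [apply Hy, Hl | apply He, Hl]. }
eapply Rle_trans; [apply holder; [exact Hp | exact Ha | intros; apply rpow_ge0] |].
rewrite Hconj; replace (1 / p) with (1 - th) by (unfold p; field; lra).
rewrite (sumR_ext n (fun l => rpow (rpow (y l) th) (1 / th)) y)
  by (intros l Hl; apply rpow_rpow_inv; [apply Hy, Hl | lra]).
replace (1 / (1 / th)) with th by (field; lra).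
assert (rpow (sumR n y) th <= 1).
{ rewrite <- (rpow_1_l th); apply rpow_le_compat; [split | lra]; [| exact Hsy].
  apply sumR_ge0; intros; apply Hy; assumption. }
assert (0 <= rpow (sumR n y) th) by apply rpow_ge0.
assert (0 <= rpow (sumR n (fun l => rpow (a l) p)) (1 - th)) by apply rpow_ge0.
nra.
Qed.

Lemma sumR_mul_simplex_rpow_le_maxR n b y e :
  (forall l, (l < n)%nat -> 0 <= b l) -> (forall l, (l < n)%nat -> 0 <= y l <= 1) ->
  sumR n y <= 1 -> (forall l, (l < n)%nat -> 1 <= e l) ->
  sumR n (fun l => b l * rpow (y l) (e l)) <= maxR n b.
Proof.
intros Hb Hy Hsy He.
assert (HM : 0 <= maxR n b) by apply maxR_ge0.
apply Rle_trans with (sumR n (fun l => maxR n b * y l)).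
- apply sumR_le; intros l Hl.
  assert (rpow (y l) (e l) <= y l).
  { rewrite <- (rpow_1_r (y l)) at 2 by apply Hy, Hl.
    apply rpow_le_exp_le1; [apply Hy, Hl | apply He, Hl]. }
  assert (b l <= maxR n b) by (apply maxR_ge, Hl).
  assert (0 <= rpow (y l) (e l)) by apply rpow_ge0.
  assert (0 <= b l) by (apply Hb, Hl).
  nra.
- rewrite sumR_scal; assert (0 <= sumR n y) by (apply sumR_ge0; intros; apply Hy; assumption).
  nra.
Qed.

Lemma Psi_core_ge n1 alpha c y P Q :
  (forall l, (l < n1)%nat -> 1 <= alpha l) -> 1 < P -> 1 < Q ->
  (forall l, (l < n1)%nat -> 0 <= c l) ->
  (forall l, (l < n1)%nat -> 0 <= y l <= 1) -> sumR n1 y <= 1 ->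
  sumR n1 (fun l => rpow (c l) P * rpow (y l) (alpha l * P / Q)) <=
  rpow (sumR n1 (fun l => if Rlt_dec (alpha l * P) Q
                          then rpow (c l) (P * Q / (Q - alphabar alpha P Q n1 * P))
                          else 0))
       (1 - alphabar alpha P Q n1 * P / Q) +
  maxR n1 (fun l => if Rlt_dec (alpha l * P) Q then 0 else rpow (c l) P).
Proof.
intros Hal HP HQ Hc Hy Hsy.
rewrite (sumR_ext n1 _ (fun l =>
   (if Rlt_dec (alpha l * P) Q then rpow (c l) P else 0) * rpow (y l) (alpha l * P / Q) +
   (if Rlt_dec (alpha l * P) Q then 0 else rpow (c l) P) * rpow (y l) (alpha l * P / Q)))
  by (intros l _; destruct (Rlt_dec (alpha l * P) Q); ring).
rewrite sumR_plus; apply Rplus_le_compat.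
- unfold alphabar; destruct (minJ alpha P Q n1) as [m |] eqn:E.
  + destruct (minJ_Some _ _ _ _ _ E) as [Hmin [k [Hk [HkJ ->]]]].
    assert (Hth : 0 < alpha k * P / Q < 1).
    { assert (1 <= alpha k) by (apply Hal, Hk).
      split; [apply Rdiv_lt_0_compat; nra |].
      apply (Rmult_lt_reg_r Q); [lra |]; unfold Rdiv; rewrite Rmult_assoc, Rinv_l; lra. }
    eapply Rle_trans; [apply (sumR_mul_simplex_rpow_le _ _ _ _ _ Hth); try assumption |].
    * intros l _; destruct (Rlt_dec (alpha l * P) Q); [apply rpow_ge0 | lra].
    (* alphabar <= alpha_l on J by minimality, and alpha_l P / Q >= 1 off J *)
    * intros l Hl; apply Rmult_le_compat_r; [left; apply Rinv_0_lt_compat; lra |].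
      destruct (Rlt_dec (alpha l * P) Q) as [HlJ | HlJ].
      -- apply Rmult_le_compat_r; [lra | apply Hmin; assumption].
      -- lra.
    * right; f_equal; apply sumR_ext; intros l Hl.
      destruct (Rlt_dec (alpha l * P) Q); [| apply rpow_0_l].
      rewrite rpow_rpow by (apply Hc, Hl); f_equal; field; split; lra.
  + rewrite (sumR_ext n1 _ (fun _ => 0)), sumR_0; [apply rpow_ge0 |].
    intros l Hl; destruct (Rlt_dec (alpha l * P) Q) as [HlJ | _]; [| ring].
    exfalso; exact (minJ_None _ _ _ _ E l Hl HlJ).
- rewrite (sumR_ext n1 _ (fun l =>
     (if Rlt_dec (alpha l * P) Q then 0 else rpow (c l) P) *
     rpow (y l) (if Rlt_dec (alpha l * P) Q then 1 else alpha l * P / Q)))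
    by (intros l _; destruct (Rlt_dec (alpha l * P) Q); ring).
  apply sumR_mul_simplex_rpow_le_maxR; try assumption.
  + intros l _; destruct (Rlt_dec (alpha l * P) Q); [lra | apply rpow_ge0].
  + intros l _; destruct (Rlt_dec (alpha l * P) Q) as [_ | HlJ]; [lra |].
    apply (Rmult_le_reg_r Q); [lra |]; unfold Rdiv; rewrite Rmult_assoc, Rinv_l; lra.
Qed.

Lemma Psi_ge n1 alpha delta P Q t y :
  (forall l, (l < n1)%nat -> 1 <= alpha l) -> 1 < P -> 1 < Q ->
  (forall l, (l < n1)%nat -> 0 <= delta l) -> 0 <= t ->
  (forall l, (l < n1)%nat -> 0 <= y l <= 1) -> sumR n1 y <= 1 ->
  rpow (sumR n1 (fun l => rpow (delta l * rpow t (alpha l)) P * rpow (y l) (alpha l * P / Q)))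
       (1 / P) <= Psi n1 alpha delta P Q t.
Proof.
intros Hal HP HQ Hd Ht Hy Hsy; unfold Psi; cbv zeta.
apply rpow_le_compat; [split | apply Rdiv_lt_0_compat; lra].
- apply sumR_ge0; intros; apply Rmult_le_pos; apply rpow_ge0.
- apply (Psi_core_ge n1 alpha (fun l => delta l * rpow t (alpha l))); try assumption.
  intros l Hl; apply Rmult_le_pos; [apply Hd, Hl | apply rpow_ge0].
Qed.

(** * Bounding the network *)

Definition preact (d : nat) (x : nat -> R) (u : mat) (l : nat) : R :=
  sumR d (fun m => u l m * x m).

Lemma preact_ge0 d x u l : (forall m, (m < d)%nat -> 0 <= x m) ->
  (forall m, (m < d)%nat -> 0 <= u l m) -> 0 <= preact d x u l.
Proof.
intros Hx Hu; apply sumR_ge0; intros m Hm; apply Rmult_le_pos; [apply Hu | apply Hx]; exact Hm.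
Qed.

Lemma preact_le_holder d x u l p : 1 < p ->
  (forall m, (m < d)%nat -> 0 <= x m) -> (forall m, (m < d)%nat -> 0 <= u l m) ->
  preact d x u l <=
  rpow (sumR d (fun m => rpow (u l m) p)) (1 / p) * lpnorm_vec (conj p) d x.
Proof.
intros Hp Hx Hu; unfold preact, lpnorm_vec.
rewrite (sumR_ext d (fun m => rpow (Rabs (x m)) (conj p)) (fun m => rpow (x m) (conj p)))
  by (intros m Hm; rewrite Rabs_pos_eq by (apply Hx, Hm); reflexivity).
apply holder; assumption.
Qed.

Lemma sumR_rpow_le_of_lpnorm_mat p n d u rho : 1 < p ->
  (forall l m, (l < n)%nat -> (m < d)%nat -> 0 <= u l m) -> lpnorm_mat p n d u <= rho ->
  sumR n (fun l => sumR d (fun m => rpow (u l m) p)) <= rpow rho p.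
Proof.
intros Hp Hu Hnorm; unfold lpnorm_mat in Hnorm.
rewrite (sumR_ext n (fun a => sumR d (fun b => rpow (Rabs (u a b)) p))
                    (fun l => sumR d (fun m => rpow (u l m) p))) in Hnorm
  by (intros l Hl; apply sumR_ext; intros m Hm; rewrite Rabs_pos_eq by (apply Hu; assumption);
      reflexivity).
set (S := sumR n (fun l => sumR d (fun m => rpow (u l m) p))) in *.
assert (HS : 0 <= S) by (apply sumR_ge0; intros; apply sumR_ge0; intros; apply rpow_ge0).
rewrite <- (rpow_inv_rpow S p) by lra.
apply rpow_le_compat; [split; [apply rpow_ge0 | exact Hnorm] | lra].
Qed.

Lemma sumR_preact_le_Psi n1 d alpha x pw pu rhow rhou rhox wr u delta :
  (forall l, (l < n1)%nat -> 1 <= alpha l) -> (forall m, (m < d)%nat -> 0 <= x m) ->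
  1 < pw -> 1 < pu -> 0 < rhou ->
  (forall l, (l < n1)%nat -> 0 <= wr l) ->
  (forall l m, (l < n1)%nat -> (m < d)%nat -> 0 <= u l m) ->
  lpnorm_mat pu n1 d u <= rhou -> lpnorm_vec pw n1 wr <= rhow ->
  lpnorm_vec (conj pu) d x <= rhox -> (forall l, (l < n1)%nat -> 0 <= delta l) ->
  sumR n1 (fun l => wr l * (delta l * rpow (preact d x u l) (alpha l)))
  <= rhow * Psi n1 alpha delta (conj pw) pu (rhou * rhox).
Proof.
intros Hal Hx Hpw Hpu Hru Hw Hu Hnu Hnw Hnx Hd.
set (P := conj pw); assert (HP : 1 < P) by (apply conj_gt1, Hpw).
assert (Hrx : 0 <= rhox) by (eapply Rle_trans; [apply rpow_ge0 | exact Hnx]).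
set (V := fun l => sumR d (fun m => rpow (u l m) pu)).
set (Ru := rpow rhou pu); assert (HRu : 0 < Ru) by (apply rpow_gt0, Hru).
(* y is the share of row l in the p_u-th power of the norm of u, so it lies in the simplex *)
set (y := fun l => V l / Ru).
assert (HV : forall l, 0 <= V l) by (intros; apply sumR_ge0; intros; apply rpow_ge0).
assert (HsV : sumR n1 V <= Ru) by (apply sumR_rpow_le_of_lpnorm_mat; assumption).
assert (Hy : forall l, (l < n1)%nat -> 0 <= y l <= 1).
{ intros l Hl; unfold y; split; [apply Rmult_le_pos; [apply HV | left; apply Rinv_0_lt_compat, HRu] |].
  apply (Rmult_le_reg_r Ru); [exact HRu |]; unfold Rdiv.
  rewrite Rmult_assoc, Rinv_l, Rmult_1_r, Rmult_1_l by lra.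
  eapply Rle_trans; [apply (sumR_ge_term n1 V); [intros; apply HV | exact Hl] | exact HsV]. }
assert (Hsy : sumR n1 y <= 1).
{ unfold y, Rdiv; rewrite (sumR_ext n1 _ (fun l => / Ru * V l)) by (intros; ring).
  rewrite sumR_scal; apply (Rmult_le_reg_l Ru); [exact HRu |].
  rewrite <- Rmult_assoc, Rinv_r, Rmult_1_l by lra; lra. }
assert (Hterm : forall l, (l < n1)%nat ->
  rpow (delta l * rpow (preact d x u l) (alpha l)) P <=
  rpow (delta l * rpow (rhou * rhox) (alpha l)) P * rpow (y l) (alpha l * P / pu)).
{ intros l Hl; assert (Hdl := Hd l Hl); assert (Hall := Hal l Hl).
  assert (Hpre : 0 <= preact d x u l) by (apply preact_ge0; [| intros; apply Hu]; assumption).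
  rewrite !(rpow_mult_distr (delta l)), !rpow_rpow by (try apply rpow_ge0; nra).
  rewrite Rmult_assoc; apply Rmult_le_compat_l; [apply rpow_ge0 |].
  replace (alpha l * P / pu) with (1 / pu * (alpha l * P)) by (field; lra).
  rewrite <- (rpow_rpow (y l) (1 / pu)), <- (rpow_mult_distr (rhou * rhox))
    by (first [apply rpow_ge0 | apply (proj1 (Hy l Hl)) | nra]).
  apply rpow_le_compat; [split; [exact Hpre |] | nra].
  unfold y; rewrite rpow_div by (try apply HV; exact HRu).
  unfold Ru; rewrite rpow_rpow_inv by lra.
  replace (rhou * rhox * (rpow (V l) (1 / pu) / rhou)) with (rpow (V l) (1 / pu) * rhox)
    by (field; lra).
  eapply Rle_trans; [apply (preact_le_holder d x u l pu Hpu Hx); intros; apply Hu; assumption |].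
  apply Rmult_le_compat_l; [apply rpow_ge0 | exact Hnx]. }
eapply Rle_trans;
  [apply (holder n1 wr (fun l => delta l * rpow (preact d x u l) (alpha l)) pw Hpw Hw);
   intros l Hl; apply Rmult_le_pos; [apply Hd, Hl | apply rpow_ge0] |].
fold P; apply Rmult_le_compat; try apply rpow_ge0.
- eapply Rle_trans; [| exact Hnw]; right; unfold lpnorm_vec; f_equal.
  apply sumR_ext; intros l Hl; rewrite Rabs_pos_eq by (apply Hw, Hl); reflexivity.
- eapply Rle_trans; [| apply (Psi_ge n1 alpha delta P pu (rhou * rhox) y); try assumption; nra].
  apply rpow_le_compat; [split; [apply sumR_ge0; intros; apply rpow_ge0 |] |].
  + apply sumR_le, Hterm.
  + apply Rdiv_lt_0_compat; lra.
Qed.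

(** * Partial derivatives of the network *)

Lemma epsilon_derivable_pt_lim g x D : derivable_pt_lim g x D ->
  epsilon (inhabits 0) (fun D => derivable_pt_lim g x D) = D.
Proof.
intros H; apply (uniqueness_limite g x); [apply epsilon_spec; exists D |]; exact H.
Qed.

Lemma pdw_lim g s t w u D :
  derivable_pt_lim (fun h => g (upd w s t h) u) (w s t) D -> pdw s t g w u = D.
Proof. apply epsilon_derivable_pt_lim. Qed.

Lemma pdu_lim g a b w u D :
  derivable_pt_lim (fun h => g w (upd u a b h)) (u a b) D -> pdu a b g w u = D.
Proof. apply epsilon_derivable_pt_lim. Qed.

Lemma pdw_indep_w g s t w u : (forall w', g w' u = g w u) -> pdw s t g w u = 0.
Proof.
intros Hg; apply pdw_lim, (derivable_pt_lim_ext (fun _ => g w u)).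
- intros h; symmetry; apply Hg.
- apply derivable_pt_lim_const.
Qed.

Lemma pdu_indep_u g a b w u : (forall u', g w u' = g w u) -> pdu a b g w u = 0.
Proof.
intros Hg; apply pdu_lim, (derivable_pt_lim_ext (fun _ => g w u)).
- intros h; symmetry; apply Hg.
- apply derivable_pt_lim_const.
Qed.

Lemma derivable_pt_lim_affine y h0 c x : derivable_pt_lim (fun h => y + (h - h0) * c) x c.
Proof.
intros eps Heps; exists (mkposreal _ Heps); intros h Hh _.
replace ((y + (x + h - h0) * c - (y + (x - h0) * c)) / h - c) with 0 by (field; exact Hh).
rewrite Rabs_R0; exact Heps.
Qed.

Lemma derivable_pt_lim_sumR n (F : R -> nat -> R) D x :
  (forall l, (l < n)%nat -> derivable_pt_lim (fun h => F h l) x (D l)) ->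
  derivable_pt_lim (fun h => sumR n (F h)) x (sumR n D).
Proof.
induction n as [| n IH]; simpl; intros H; [apply derivable_pt_lim_const |].
apply derivable_pt_lim_plus; [apply IH; intros |]; apply H; lia.
Qed.

Lemma upd_entry_eq_affine (w : mat) s t i j h :
  upd w s t h i j = w i j + (h - w s t) * (if Nat.eqb i s && Nat.eqb j t then 1 else 0).
Proof.
unfold upd; destruct (Nat.eqb_spec i s), (Nat.eqb_spec j t); subst; simpl; ring.
Qed.

Lemma affine_pos_near y h0 c : 0 < y ->
  exists a b, a < h0 < b /\ forall h, a < h < b -> 0 < y + (h - h0) * c.
Proof.
intros Hy; set (del := y / (Rabs c + 1)).
assert (Hc : 0 <= Rabs c) by apply Rabs_pos.
assert (Hdel : 0 < del) by (apply Rdiv_lt_0_compat; lra).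
exists (h0 - del), (h0 + del); split; [lra |]; intros h Hh.
assert (Rabs ((h - h0) * c) < y).
{ rewrite Rabs_mult; apply Rle_lt_trans with (del * Rabs c).
  - apply Rmult_le_compat_r; [exact Hc | apply Rabs_le; lra].
  - unfold del; apply (Rmult_lt_reg_r (Rabs c + 1)); [lra |].
    replace (y / (Rabs c + 1) * Rabs c * (Rabs c + 1)) with (y * Rabs c) by (field; lra).
    nra. }
apply Rabs_def2 in H; lra.
Qed.

Lemma derivable_pt_lim_rpow_affine y h0 c e : 0 < y \/ c = 0 ->
  derivable_pt_lim (fun h => rpow (y + (h - h0) * c) e) h0 (e * rpow y (e - 1) * c).
Proof.
intros [Hy | ->].
- destruct (affine_pos_near y h0 c Hy) as [a [b [Hab Hpos]]].
  apply (derivable_pt_lim_locally_ext (fun h => Rpower (y + (h - h0) * c) e) _ _ a b _ Hab).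
  { intros h Hh; symmetry; apply rpow_Rpower, Hpos, Hh. }
  rewrite rpow_Rpower by exact Hy.
  apply (derivable_pt_lim_comp (fun h => y + (h - h0) * c) (fun z => Rpower z e)).
  + apply derivable_pt_lim_affine.
  + cbv beta; replace (y + (h0 - h0) * c) with y by ring.
    apply derivable_pt_lim_power, Hy.
- rewrite Rmult_0_r; apply (derivable_pt_lim_ext (fun _ => rpow y e)).
  + intros h; rewrite Rmult_0_r, Rplus_0_r; reflexivity.
  + apply derivable_pt_lim_const.
Qed.

Lemma preact_upd d x u a b h l : (b < d)%nat ->
  preact d x (upd u a b h) l = preact d x u l + (h - u a b) * (if Nat.eqb l a then x b else 0).
Proof.
intros Hb; unfold preact, upd.
rewrite (sumR_ext d _ (fun m => u l m * x m +
           (if Nat.eqb m b then (if Nat.eqb l a then (h - u a b) * x m else 0) else 0)))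
  by (intros m _; destruct (Nat.eqb_spec l a), (Nat.eqb_spec m b); subst; simpl; ring).
rewrite sumR_plus, sumR_delta; destruct (Nat.ltb_spec b d); [| lia].
destruct (Nat.eqb l a); ring.
Qed.

Lemma derivable_pt_lim_rpow_preact d x u a b l e : (b < d)%nat ->
  0 < preact d x u l \/ (if Nat.eqb l a then x b else 0) = 0 ->
  derivable_pt_lim (fun h => rpow (preact d x (upd u a b h) l) e) (u a b)
    (e * rpow (preact d x u l) (e - 1) * (if Nat.eqb l a then x b else 0)).
Proof.
intros Hb Hpos; apply (derivable_pt_lim_ext
  (fun h => rpow (preact d x u l + (h - u a b) * (if Nat.eqb l a then x b else 0)) e)).
- intros h; rewrite preact_upd by exact Hb; reflexivity.
- apply derivable_pt_lim_rpow_affine, Hpos.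
Qed.

Lemma sumR_u_mul_row_delta n1 d (u : mat) x a0 K : (a0 < n1)%nat ->
  sumR n1 (fun a => sumR d (fun b => u a b * (K * (if Nat.eqb a0 a then x b else 0)))) =
  K * preact d x u a0.
Proof.
intros Ha0; rewrite (sumR_ext n1 _ (fun a => if Nat.eqb a a0 then K * preact d x u a else 0)).
- rewrite sumR_delta; destruct (Nat.ltb_spec a0 n1); [reflexivity | lia].
- intros a _; rewrite Nat.eqb_sym; destruct (Nat.eqb a a0).
  + unfold preact; rewrite <- sumR_scal; apply sumR_ext; intros; ring.
  + rewrite (sumR_ext d _ (fun _ => 0)) by (intros; ring); apply sumR_0.
Qed.

Lemma pdw_fnet n1 d alpha x r s t w u :
  pdw s t (fnet n1 d alpha x r) w u =
  if Nat.eqb s r && Nat.ltb t n1 then rpow (preact d x u t) (alpha t) else 0.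
Proof.
set (c := fun l => rpow (preact d x u l) (alpha l)).
set (ind := fun l => if Nat.eqb r s && Nat.eqb l t then 1 else 0).
transitivity (sumR n1 (fun l => ind l * c l)).
- apply pdw_lim, derivable_pt_lim_sumR; intros l _.
  apply (derivable_pt_lim_ext (fun h => w r l * c l + (h - w s t) * (ind l * c l))).
  + intros h; rewrite upd_entry_eq_affine; unfold ind, c, preact; ring.
  + apply derivable_pt_lim_affine.
- rewrite (sumR_ext n1 _ (fun l => if Nat.eqb l t then (if Nat.eqb s r then c l else 0) else 0)).
  + rewrite sumR_delta; destruct (Nat.eqb s r), (Nat.ltb t n1); reflexivity.
  + intros l _; unfold ind; rewrite (Nat.eqb_sym r s).
    destruct (Nat.eqb s r), (Nat.eqb l t); simpl; ring.
Qed.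

Lemma pdu_fnet n1 d alpha x r a b w u : (a < n1)%nat -> (b < d)%nat ->
  0 < preact d x u a \/ x b = 0 ->
  pdu a b (fnet n1 d alpha x r) w u =
  w r a * (alpha a * rpow (preact d x u a) (alpha a - 1) * x b).
Proof.
intros Ha Hb Hpos.
transitivity (sumR n1 (fun l =>
  w r l * (alpha l * rpow (preact d x u l) (alpha l - 1) * (if Nat.eqb l a then x b else 0)))).
- apply pdu_lim, derivable_pt_lim_sumR; intros l _.
  apply derivable_pt_lim_scal, derivable_pt_lim_rpow_preact; [exact Hb |].
  destruct (Nat.eqb_spec l a) as [-> | _]; [exact Hpos | right; reflexivity].
- rewrite (sumR_ext n1 _ (fun l => if Nat.eqb l a
           then w r l * (alpha l * rpow (preact d x u l) (alpha l - 1) * x b) else 0))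
    by (intros l _; destruct (Nat.eqb l a); ring).
  rewrite sumR_delta; destruct (Nat.ltb_spec a n1); [reflexivity | lia].
Qed.

Section Contractions.

Variables (n1 d : nat) (alpha x : nat -> R) (r : nat) (w u : mat).
Hypothesis hx : forall m, (m < d)%nat -> 0 <= x m.
Hypothesis halpha : forall l, (l < n1)%nat -> 1 <= alpha l.
Hypothesis hw : forall l, (l < n1)%nat -> 0 <= w r l.
Hypothesis hu : forall l m, (l < n1)%nat -> (m < d)%nat -> 0 < u l m.

Local Notation f := (fnet n1 d alpha x r).

Lemma preact_pos_or a b : (a < n1)%nat -> (b < d)%nat -> 0 < preact d x u a \/ x b = 0.
Proof.
intros Ha Hb; destruct (hx b Hb) as [Hxb | Hxb]; [left | right; auto].
apply Rlt_le_trans with (u a b * x b); [apply Rmult_lt_0_compat; [apply hu |]; assumption |].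
apply (sumR_ge_term d (fun m => u a m * x m)); [| exact Hb].
intros m Hm; apply Rmult_le_pos; [left; apply hu | apply hx]; assumption.
Qed.

Lemma preact_nonneg a : (a < n1)%nat -> 0 <= preact d x u a.
Proof. intros Ha; apply preact_ge0; [exact hx | intros; left; apply hu; assumption]. Qed.

Lemma pdu_fnet_nonneg a b : (a < n1)%nat -> (b < d)%nat -> 0 <= pdu a b f w u.
Proof.
intros Ha Hb; rewrite pdu_fnet by (try apply preact_pos_or; assumption).
assert (1 <= alpha a) by (apply halpha, Ha).
assert (0 <= rpow (preact d x u a) (alpha a - 1)) by apply rpow_ge0.
assert (0 <= x b) by (apply hx, Hb).
assert (0 <= w r a) by (apply hw, Ha).
apply Rmult_le_pos; [| apply Rmult_le_pos; [apply Rmult_le_pos |]]; lra.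
Qed.

Lemma sum_w_pdw_fnet s :
  sumR n1 (fun t => w s t * pdw s t f w u) =
  if Nat.eqb s r then sumR n1 (fun l => w r l * rpow (preact d x u l) (alpha l)) else 0.
Proof.
destruct (Nat.eqb_spec s r) as [-> | Hsr].
- apply sumR_ext; intros t Ht; rewrite pdw_fnet, Nat.eqb_refl.
  destruct (Nat.ltb_spec t n1); [reflexivity | lia].
- rewrite (sumR_ext n1 _ (fun _ => 0)); [apply sumR_0 |].
  intros t _; rewrite pdw_fnet; destruct (Nat.eqb_spec s r); [contradiction | simpl; ring].
Qed.

Lemma sum_u_pdu_fnet :
  sumR n1 (fun a => sumR d (fun b => u a b * pdu a b f w u)) =
  sumR n1 (fun l => w r l * (alpha l * rpow (preact d x u l) (alpha l))).
Proof.
apply sumR_ext; intros a Ha.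
rewrite (sumR_ext d _ (fun b => w r a * alpha a * rpow (preact d x u a) (alpha a - 1) * (u a b * x b)))
  by (intros b Hb; rewrite pdu_fnet by (try apply preact_pos_or; assumption); ring).
rewrite sumR_scal; fold (preact d x u a).
rewrite Rmult_assoc, rpow_minus1_mult by (apply preact_nonneg, Ha); ring.
Qed.

Lemma sum_w_pdw_pdw_fnet s q b' :
  sumR n1 (fun t => w s t * pdw s t (pdw q b' f) w u) = 0.
Proof.
rewrite (sumR_ext n1 _ (fun _ => 0)); [apply sumR_0 |].
intros t _; rewrite pdw_indep_w; [ring |].
intros w'; rewrite !pdw_fnet; reflexivity.
Qed.

Lemma preact_row_pos_or a b l : (l < n1)%nat -> (b < d)%nat ->
  0 < preact d x u l \/ (if Nat.eqb l a then x b else 0) = 0.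
Proof.
intros Hl Hb; destruct (Nat.eqb_spec l a) as [-> | _]; [apply preact_pos_or | right]; auto.
Qed.

Lemma pdu_pdw_fnet q b' a b : (b' < n1)%nat -> (b < d)%nat ->
  pdu a b (pdw q b' f) w u =
  if Nat.eqb q r
  then alpha b' * rpow (preact d x u b') (alpha b' - 1) * (if Nat.eqb b' a then x b else 0)
  else 0.
Proof.
intros Hb' Hb.
assert (Hpdw : forall w' u', pdw q b' f w' u' =
          if Nat.eqb q r then rpow (preact d x u' b') (alpha b') else 0).
{ intros; rewrite pdw_fnet; destruct (Nat.ltb_spec b' n1); [| lia].
  rewrite andb_true_r; reflexivity. }
destruct (Nat.eqb q r) eqn:Eqr.
- apply pdu_lim, (derivable_pt_lim_ext (fun h => rpow (preact d x (upd u a b h) b') (alpha b'))).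
  + intros h; rewrite Hpdw; reflexivity.
  + apply derivable_pt_lim_rpow_preact, preact_row_pos_or; assumption.
- apply pdu_indep_u; intros u'; rewrite !Hpdw; reflexivity.
Qed.

Lemma pdw_pdu_fnet a' b'' s t : (a' < n1)%nat -> (b'' < d)%nat ->
  pdw s t (pdu a' b'' f) w u =
  (if Nat.eqb r s && Nat.eqb a' t then 1 else 0) *
  (alpha a' * rpow (preact d x u a') (alpha a' - 1) * x b'').
Proof.
intros Ha' Hb''; apply pdw_lim.
apply (derivable_pt_lim_ext (fun h => w r a' * (alpha a' * rpow (preact d x u a') (alpha a' - 1) * x b'') +
  (h - w s t) * ((if Nat.eqb r s && Nat.eqb a' t then 1 else 0) *
                 (alpha a' * rpow (preact d x u a') (alpha a' - 1) * x b'')))).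
- intros h; rewrite pdu_fnet, upd_entry_eq_affine by (try apply preact_pos_or; assumption); ring.
- apply derivable_pt_lim_affine.
Qed.

(* The closed formula for the first derivative is only valid where the preactivation of row a'
   is positive, which holds on a neighbourhood of u. *)
Lemma pdu_pdu_fnet a' b'' a b : (a' < n1)%nat -> (b'' < d)%nat -> (b < d)%nat -> 0 < x b'' ->
  pdu a b (pdu a' b'' f) w u =
  w r a' * alpha a' * x b'' *
  ((alpha a' - 1) * rpow (preact d x u a') (alpha a' - 1 - 1) * (if Nat.eqb a' a then x b else 0)).
Proof.
intros Ha' Hb'' Hb Hxb.
assert (HS : 0 < preact d x u a').
{ destruct (preact_pos_or a' b'') as [HS | Hx0]; [assumption | assumption | exact HS | lra]. }
destruct (affine_pos_near (preact d x u a') (u a b) (if Nat.eqb a' a then x b else 0) HS)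
  as [lo [hi [Hint Hnear]]].
apply pdu_lim.
apply (derivable_pt_lim_locally_ext
  (fun h => w r a' * alpha a' * x b'' * rpow (preact d x (upd u a b h) a') (alpha a' - 1))
  _ _ lo hi _ Hint).
- intros h Hh; rewrite pdu_fnet by (try (left; rewrite preact_upd; [apply Hnear |]); assumption).
  ring.
- apply derivable_pt_lim_scal, derivable_pt_lim_rpow_preact; [exact Hb | left; exact HS].
Qed.

Lemma sum_u_pdu_pdw_fnet_le q b' : (b' < n1)%nat ->
  sumR n1 (fun a => sumR d (fun b => u a b * pdu a b (pdw q b' f) w u))
  <= linf n1 alpha * pdw q b' f w u.
Proof.
intros Hb'; rewrite pdw_fnet; destruct (Nat.ltb_spec b' n1); [| lia].
rewrite (sumR_ext n1 _ (fun a => sumR d (fun b => u a b *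
   ((if Nat.eqb q r then alpha b' * rpow (preact d x u b') (alpha b' - 1) else 0) *
    (if Nat.eqb b' a then x b else 0)))))
  by (intros a _; apply sumR_ext; intros b Hb;
      rewrite pdu_pdw_fnet by assumption; destruct (Nat.eqb q r); ring).
rewrite sumR_u_mul_row_delta by exact Hb'.
destruct (Nat.eqb q r); simpl; [| lra].
rewrite Rmult_assoc, rpow_minus1_mult by (apply preact_nonneg, Hb').
apply Rmult_le_compat_r; [apply rpow_ge0 |].
apply le_linf; [| assert (1 <= alpha b') by (apply halpha, Hb'); lra]; exact Hb'.
Qed.

Lemma sum_w_pdw_pdu_fnet_le s a' b'' : (a' < n1)%nat -> (b'' < d)%nat ->
  sumR n1 (fun t => w s t * pdw s t (pdu a' b'' f) w u) <= pdu a' b'' f w u.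
Proof.
intros Ha' Hb''; set (K := alpha a' * rpow (preact d x u a') (alpha a' - 1) * x b'').
rewrite (sumR_ext n1 _ (fun t => if Nat.eqb t a' then (if Nat.eqb r s then w s t * K else 0) else 0)).
- rewrite sumR_delta; destruct (Nat.ltb_spec a' n1); [| lia].
  destruct (Nat.eqb_spec r s) as [<- | _].
  + rewrite pdu_fnet by (try apply preact_pos_or; assumption); right; reflexivity.
  + apply pdu_fnet_nonneg; assumption.
- intros t _; rewrite pdw_pdu_fnet by assumption; fold K; rewrite (Nat.eqb_sym a' t).
  destruct (Nat.eqb r s), (Nat.eqb t a'); simpl; ring.
Qed.

Lemma sum_u_pdu_pdu_fnet_le a' b'' : (a' < n1)%nat -> (b'' < d)%nat ->
  sumR n1 (fun a => sumR d (fun b => u a b * pdu a b (pdu a' b'' f) w u))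
  <= (linf n1 alpha - 1) * pdu a' b'' f w u.
Proof.
intros Ha' Hb''; destruct (hx b'' Hb'') as [Hxb | Hx0].
- set (S := preact d x u a').
  rewrite (sumR_ext n1 _ (fun a => sumR d (fun b => u a b *
     (w r a' * alpha a' * x b'' * ((alpha a' - 1) * rpow S (alpha a' - 1 - 1)) *
      (if Nat.eqb a' a then x b else 0)))))
    by (intros a _; apply sumR_ext; intros b Hb; rewrite pdu_pdu_fnet by assumption; fold S; ring).
  rewrite sumR_u_mul_row_delta, pdu_fnet by (try apply preact_pos_or; assumption); fold S.
  rewrite !Rmult_assoc, rpow_minus1_mult by (apply preact_nonneg, Ha').
  assert (0 <= w r a') by (apply hw, Ha'); assert (1 <= alpha a') by (apply halpha, Ha').
  assert (alpha a' <= linf n1 alpha) by (apply le_linf; [exact Ha' | lra]).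
  assert (0 <= rpow S (alpha a' - 1)) by apply rpow_ge0.
  assert (0 <= w r a' * (alpha a' * (x b'' * rpow S (alpha a' - 1)))).
  { apply Rmult_le_pos; [| apply Rmult_le_pos; [| apply Rmult_le_pos]]; lra. }
  nra.
- assert (Hzero : forall u', pdu a' b'' f w u' = 0).
  { intros u'; rewrite pdu_fnet by (try (right; symmetry; exact Hx0); assumption).
    rewrite <- Hx0; ring. }
  rewrite Hzero, Rmult_0_r, (sumR_ext n1 _ (fun _ => 0)), sumR_0; [lra |].
  intros a _; rewrite (sumR_ext d _ (fun _ => 0)); [apply sumR_0 |].
  intros b _; rewrite pdu_indep_u; [ring | intros u'; rewrite !Hzero; reflexivity].
Qed.

End Contractions.

Theorem mainTheorem11
  (n K n1 d : nat) (X : nat -> nat -> R) (alpha : nat -> R)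
  (pw pu rhow rhou : R)
  (hX : forall i m, (i < n)%nat -> (m < d)%nat -> 0 <= X i m)
  (halpha : forall l, (l < n1)%nat -> 1 <= alpha l)
  (hpw : 1 < pw) (hpu : 1 < pu) (hrhow : 0 < rhow) (hrhou : 0 < rhou) :
  let rhox := maxR n (fun i => lpnorm_vec (conj pu) d (X i)) in
  let Cw := rhow * Psi n1 alpha (fun _ => 1) (conj pw) pu (rhou * rhox) in
  let Cu := rhow * Psi n1 alpha alpha (conj pw) pu (rhou * rhox) in
  forall i w u r s q b' a' b'',
  (i < n)%nat -> Bpp K n1 d pw pu rhow rhou w u ->
  (r < K)%nat -> (s < K)%nat -> (q < K)%nat ->
  (b' < n1)%nat -> (a' < n1)%nat -> (b'' < d)%nat ->
  let f := fnet n1 d alpha (X i) r in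
  sumR n1 (fun t => w s t * pdw s t f w u) <= Cw /\
  sumR n1 (fun a => sumR d (fun b => u a b * pdu a b f w u)) <= Cu /\
  sumR n1 (fun t => w s t * pdw s t (pdw q b' f) w u) = 0 /\
  sumR n1 (fun a => sumR d (fun b => u a b * pdu a b (pdw q b' f) w u))
    <= linf n1 alpha * pdw q b' f w u /\
  sumR n1 (fun t => w s t * pdw s t (pdu a' b'' f) w u) <= pdu a' b'' f w u /\
  sumR n1 (fun a => sumR d (fun b => u a b * pdu a b (pdu a' b'' f) w u))
    <= (linf n1 alpha - 1) * pdu a' b'' f w u.
Proof.
intros rhox Cw Cu i w u r s q b' a' b'' Hi [Hw [Hu [Hnu Hnw]]] Hr Hs Hq Hb' Ha' Hb'' f.
assert (Hx : forall m, (m < d)%nat -> 0 <= X i m) by (intros; apply hX; assumption).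
assert (Hwr : forall l, (l < n1)%nat -> 0 <= w r l) by (intros; left; apply Hw; assumption).
assert (Hbound : forall delta, (forall l, (l < n1)%nat -> 0 <= delta l) ->
  sumR n1 (fun l => w r l * (delta l * rpow (preact d (X i) u l) (alpha l)))
  <= rhow * Psi n1 alpha delta (conj pw) pu (rhou * rhox)).
{ intros delta Hd; apply sumR_preact_le_Psi; try assumption.
  - intros l m Hl Hm; left; apply Hu; assumption.
  - apply Hnw, Hr.
  - apply (maxR_ge n (fun i => lpnorm_vec (conj pu) d (X i))), Hi. }
unfold f; repeat split.
- rewrite sum_w_pdw_fnet; destruct (Nat.eqb s r).
  + eapply Rle_trans; [| apply (Hbound (fun _ => 1)); intros; lra].
    right; apply sumR_ext; intros; ring.
  + apply Rmult_le_pos; [lra | apply rpow_ge0].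
- rewrite sum_u_pdu_fnet by assumption; apply Hbound.
  intros l Hl; assert (1 <= alpha l) by (apply halpha, Hl); lra.
- apply sum_w_pdw_pdw_fnet.
- apply sum_u_pdu_pdw_fnet_le; assumption.
- apply sum_w_pdw_pdu_fnet_le; assumption.
- apply sum_u_pdu_pdu_fnet_le; assumption.
Qed.
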